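(* With $W=C^0_+\oplus E_0\oplus C^0_-$ and $\mathcal{T}=E+iC^0$, one has (1) $W=\{x\in E:\ e^{zh}x\in\mathcal{T}\text{ for all }z\in\mathcal{S}_\pi\}$; (2) $\overline W=\{x\in E:\ e^{zh}x\in E+iC\text{ for all }z\in\mathcal{S}_\pi\}$, where $e^{zh}$ denotes the complex linear extension to $E_\mathbb{C}$ and $\mathcal{S}_\pi=\{z\in\mathbb{C}:0<\operatorname{Im}z<\pi\}$.
   Context: $E$ finite-dimensional real vector space; $h\in\mathrm{End}(E)$ diagonalizable with eigenvalues in $\{-1,0,1\}$, $E_j=\ker(h-j)$; $\tau=e^{\pi ih}$; $C$ pointed generating closed convex cone invariant under $e^{\mathbb{R}h}$ and under $-\tau$, interior $C^0$; $C_\pm=\pm C\cap E_{\pm1}$ with interiors $C_\pm^0$ relative to $E_{\pm1}$. *)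

From HB Require Import structures.
From mathcomp Require Import all_boot all_order all_algebra.
From mathcomp Require Import all_classical all_reals all_analysis.
Set Implicit Arguments. Unset Strict Implicit. Unset Printing Implicit Defensive.
Import Order.TTheory GRing.Theory Num.Theory.
Import numFieldNormedType.Exports.
Local Open Scope classical_set_scope.
Local Open Scope ring_scope.

(* E = 'rV[R]_n (row vectors); an endomorphism h of E is a
   matrix acting on the right: x |-> x *m h.  The complexification
   E_C = E + iE is represented by pairs (re, im) : 'rV_n * 'rV_n. *)

Section Defs.
Variables (R : realType) (n : nat).
Local Notation E := 'rV[R]_n.

Definition Eig (h : 'M[R]_n) (j : R) : set E := [set x | x *m h = j *: x].

(* h is diagonalizable with eigenvalues in {-1,0,1}:
   E = E_{-1} + E_0 + E_1 (the sum is automatically direct). *)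
Definition diag_spec101 (h : 'M[R]_n) : Prop :=
  forall x : E, exists xm x0 xp,
    Eig h (-1) xm /\ Eig h 0 x0 /\ Eig h 1 xp /\ x = xm + x0 + xp.

(* Spectral projections onto E_j along the other eigenspaces (Lagrange
   interpolation; valid as h^3 = h under diag_spec101). *)

Definition projp (h : 'M[R]_n) : 'M[R]_n := 2%:R^-1 *: (h *m h + h).
Definition projn (h : 'M[R]_n) : 'M[R]_n := 2%:R^-1 *: (h *m h - h).
Definition proj0 (h : 'M[R]_n) : 'M[R]_n := 1%:M - h *m h.

(* Complex-linear extension of e^{zh} to E_C, z = a + i b:
   e^{zh} = sum_j e^{z j} P_j, with e^{zj} = e^{ja} (cos (jb) + i sin (jb)). *)
Definition expzh (h : 'M[R]_n) (a b : R) (w : E * E) : E * E :=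
  let P j := if j == 1 then projp h else if j == -1 then projn h else proj0 h in
  let c j := expR (j * a) * cos (j * b) in
  let s j := expR (j * a) * sin (j * b) in
  let term j := (c j *: (w.1 *m P j) - s j *: (w.2 *m P j),
                 s j *: (w.1 *m P j) + c j *: (w.2 *m P j)) in
  ((term (-1)).1 + (term 0).1 + (term 1).1,
   (term (-1)).2 + (term 0).2 + (term 1).2).

(* e^{th} on E (t real) and tau = e^{pi i h} on E (both are real operators:
   the imaginary part of the complexified operator applied to real x is 0). *)
Definition expth (h : 'M[R]_n) (t : R) (x : E) : E := (expzh h t 0 (x, 0)).1.
Definition tau (h : 'M[R]_n) (x : E) : E := (expzh h 0 pi (x, 0)).1.

Definition convex_cone (C : set E) : Prop :=
  C 0 /\ (forall x y, C x -> C y -> C (x + y)) /\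
  (forall (l : R) x, 0 <= l -> C x -> C (l *: x)).
Definition pointed (C : set E) : Prop := forall x, C x -> C (- x) -> x = 0.
Definition generating (C : set E) : Prop :=
  forall x : E, exists y z, C y /\ C z /\ x = y - z.

Definition rel_interior (S A : set E) : set E :=
  [set x | A x /\ exists e : R, 0 < e /\ forall y, ball x e y -> S y -> A y].

Definition Cplus (h : 'M[R]_n) (C : set E) : set E := C `&` Eig h 1.
Definition Cminus (h : 'M[R]_n) (C : set E) : set E := [set x | C (- x)] `&` Eig h (-1).

Definition Wset (h : 'M[R]_n) (C : set E) : set E :=
  [set x | exists xp x0 xm, rel_interior (Eig h 1) (Cplus h C) xp /\ Eig h 0 x0 /\
     rel_interior (Eig h (-1)) (Cminus h C) xm /\ x = xp + x0 + xm].

Definition strip (a b : R) : Prop := 0 < b < pi.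

End Defs.

(* Split x = x_- + x_0 + x_+ along the eigenspaces of h.  Then
   Im e^{(a+ib)h} x = sin b (e^a x_+ - e^{-a} x_-) is a positive combination of
   x_+ and -x_-, so (1) reduces to: x_+ - x_- is in C^0 iff x_+ is in C_+^0 and
   x_- in C_-^0.  "Only if": the flow e^{th} turns x_- + x_+ in C into
   x_- + s x_+ in C for all s > 0, and closedness lets s tend to 0 (or to
   infinity after rescaling), so membership in C splits along E_-1 + E_1.
   "If": C^0 contains some v_- + v_+ with v_+- in E_+-1, namely c + (-tau c)
   for any c in C^0 (nonempty as C is generating), and
   x_+ - x_- = e (v_- + v_+) + (x_+ - e v_+) + (-x_- - e v_-) with the last two
   terms in C for small e > 0.  For (2), the imaginary part is continuous in x,
   and if x_+ - x_- is in C then x + e (v_+ - v_-) is in W for every e > 0. *)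

From HB Require Import structures.
From mathcomp Require Import all_boot all_order all_algebra.
From mathcomp Require Import all_classical all_reals all_analysis.
From mathcomp Require Import ring lra.
Import Order.TTheory GRing.Theory Num.Theory.
Import numFieldNormedType.Exports.
Local Open Scope classical_set_scope.
Local Open Scope ring_scope.

Section Spectral.
Context {R : realType} {n : nat} {h : 'M[R]_n}.
Local Notation E := 'rV[R]_n.

Lemma EigD {j} {x y : E} : Eig h j x -> Eig h j y -> Eig h j (x + y).
Proof. by rewrite /Eig /= => hx hy; rewrite mulmxDl hx hy scalerDr. Qed.

Lemma EigZ {j} l {x : E} : Eig h j x -> Eig h j (l *: x).
Proof. by rewrite /Eig /= => hx; rewrite -scalemxAl hx !scalerA mulrC. Qed.

Lemma EigN {j} {x : E} : Eig h j x -> Eig h j (- x).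
Proof. by rewrite -scaleN1r; apply: EigZ. Qed.

Lemma Eig_sqr {j} {x : E} : Eig h j x -> x *m (h *m h) = (j * j) *: x.
Proof. by rewrite /Eig /= => hx; rewrite mulmxA hx -scalemxAl hx scalerA. Qed.

Section Projections.
Variables (xm x0 xp : E).
Hypotheses (hm : Eig h (-1) xm) (h0 : Eig h 0 x0) (hp : Eig h 1 xp).

Let half_double (x : E) : 2%:R^-1 *: (x + x) = x.
Proof. by rewrite -[x in x + x]scale1r -scalerDl scalerA mulVf ?scale1r ?pnatr_eq0. Qed.

Lemma projp_eig : (xm + x0 + xp) *m projp h = xp.
Proof.
rewrite /projp -scalemxAr !mulmxDl !mulmxDr.
rewrite (Eig_sqr hm) (Eig_sqr h0) (Eig_sqr hp) hm h0 hp.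
rewrite !scale0r !mulr0 !scale0r !mulrNN !mul1r !scale1r !scaleN1r.
by rewrite ?addr0 ?add0r subrr add0r half_double.
Qed.

Lemma projn_eig : (xm + x0 + xp) *m projn h = xm.
Proof.
rewrite /projn -scalemxAr !mulmxDl mulmxBr mulmxBr mulmxBr.
rewrite (Eig_sqr hm) (Eig_sqr h0) (Eig_sqr hp) hm h0 hp.
rewrite !scale0r !mulr0 !scale0r !mulrNN !mul1r !scale1r !scaleN1r.
by rewrite ?subr0 ?add0r ?addr0 ?opprK subrr addr0 half_double.
Qed.

Lemma proj0_eig : (xm + x0 + xp) *m proj0 h = x0.
Proof.
rewrite /proj0 !mulmxDl !mulmxBr !mulmx1 (Eig_sqr hm) (Eig_sqr h0) (Eig_sqr hp).
by rewrite !mulr0 !scale0r !mulrNN !mul1r !scale1r subr0 !subrr addr0 add0r.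
Qed.

End Projections.
Arguments projp_eig {xm x0 xp}.
Arguments projn_eig {xm x0 xp}.
Arguments proj0_eig {xm x0 xp}.

Lemma eig_decomp_inj (xm x0 xp ym y0 yp : E) :
  Eig h (-1) xm -> Eig h 0 x0 -> Eig h 1 xp ->
  Eig h (-1) ym -> Eig h 0 y0 -> Eig h 1 yp ->
  xm + x0 + xp = ym + y0 + yp -> [/\ xm = ym, x0 = y0 & xp = yp].
Proof.
move=> xm1 x00 xp1 ym1 y00 yp1 e; split.
- by rewrite -(projn_eig xm1 x00 xp1) e (projn_eig ym1 y00 yp1).
- by rewrite -(proj0_eig xm1 x00 xp1) e (proj0_eig ym1 y00 yp1).
- by rewrite -(projp_eig xm1 x00 xp1) e (projp_eig ym1 y00 yp1).
Qed.

Let eig_neq :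
  [/\ ((-1 : R) == 1) = false, ((0 : R) == 1) = false & ((0 : R) == -1) = false].
Proof. by split; apply/negbTE/eqP; lra. Qed.

Lemma expzh_eig (a b : R) (xm x0 xp : E) :
  Eig h (-1) xm -> Eig h 0 x0 -> Eig h 1 xp ->
  expzh h a b (xm + x0 + xp, 0) =
    ((expR (- a) * cos b) *: xm + x0 + (expR a * cos b) *: xp,
     (expR a * sin b) *: xp - (expR (- a) * sin b) *: xm).
Proof.
move=> hm h0 hp; have [e1 e2 e3] := eig_neq.
rewrite /expzh /= eqxx e1 e2 e3 !mul0mx !scaler0 !subr0 !addr0 eqxx.
rewrite projp_eig // projn_eig // proj0_eig //.
rewrite !mulN1r !mul1r !mul0r expR0 cos0 sin0 cosN sinN !mul1r scale0r scale1r addr0.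
by rewrite mulrN scaleNr (addrC (- _)).
Qed.

Lemma expzh_imE (a b : R) : exists M, forall y : E, (expzh h a b (y, 0)).2 = y *m M.
Proof.
eexists => y; rewrite /expzh /= !mul0mx !scaler0 !addr0.
by rewrite !scalemxAr -!mulmxDr.
Qed.

End Spectral.

Section Topology.
Context {R : realType}.

Lemma closure_ray {V : normedModType R} {A : set V} {x : V} (v : V) :
  (forall e : R, 0 < e -> A (x + e *: v)) -> closure A x.
Proof.
move=> Axv B /nbhs_normP [r r0 rB].
have v1 : 0 < `|v| + 1 by rewrite ltr_pwDr.
have e0 : 0 < r / (`|v| + 1) by rewrite divr_gt0.
exists (x + (r / (`|v| + 1)) *: v); split; first exact: Axv.
apply: rB; rewrite /= opprD addNKr normrN normrZ gtr0_norm //.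
by rewrite mulrAC ltr_pdivrMr // ltr_pM2l // ltrDl.
Qed.

Lemma mulmxr_continuous {m k} (M : 'M[R]_(m, k)) :
  continuous (fun y : 'rV[R]_m => y *m M).
Proof.
rewrite (_ : (fun y => y *m M) = fun y => \sum_i y 0 i *: row i M); last first.
  by apply/funext => y; rewrite mulmx_sum_row.
apply: (@continuous_big 'rV[R]_k _ +%R 0 xpredT add_continuous 'rV[R]_m) => i _ y.
apply: (@continuous_comp _ _ _ (fun x : 'rV[R]_m => x 0 i) (fun c : R => c *: row i M)).
  exact: coord_continuous.
exact: scalel_continuous.
Qed.

End Topology.

Section Cones.
Context {R : realType} {n : nat}.
Local Notation E := 'rV[R]_n.

Definition subspace (S : set E) :=
  S 0 /\ forall (l : R) x y, S x -> S y -> S (l *: x + y).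

Lemma subspaceZ {S : set E} l {x} : subspace S -> S x -> S (l *: x).
Proof. by move=> [S0 Slin] Sx; rewrite -[_ *: x]addr0; apply: Slin. Qed.

Lemma subspaceD {S : set E} {x y} : subspace S -> S x -> S y -> S (x + y).
Proof. by move=> [_ Slin] Sx Sy; rewrite -[x]scale1r; apply: Slin. Qed.

Lemma subspaceN {S : set E} {x} : subspace S -> S x -> S (- x).
Proof. by move=> sS Sx; rewrite -scaleN1r; apply: subspaceZ. Qed.

Lemma Eig_subspace (h : 'M[R]_n) j : subspace (Eig h j).
Proof.
split=> [|l x y hx hy]; first by rewrite /Eig /= mul0mx scaler0.
by apply: EigD => //; apply: EigZ.
Qed.

Lemma cone0 {C : set E} : convex_cone C -> C 0.
Proof. by case. Qed.

Lemma coneD {C : set E} {x y} : convex_cone C -> C x -> C y -> C (x + y).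
Proof. by move=> [_ [CD _]]; apply: CD. Qed.

Lemma coneZ {C : set E} {l : R} {x} : convex_cone C -> 0 <= l -> C x -> C (l *: x).
Proof. by move=> [_ [_ CZ]]; apply: CZ. Qed.

Lemma convex_coneI (C S : set E) :
  convex_cone C -> subspace S -> convex_cone (C `&` S).
Proof.
move=> cC sS; split; first by split; [exact: cone0 | case: sS].
split=> [x y [Cx Sx] [Cy Sy] | l x l0 [Cx Sx]].
  by split; [exact: coneD | exact: subspaceD].
by split; [exact: coneZ | exact: subspaceZ].
Qed.

Lemma interior_rel_interior (A : set E) : interior A = rel_interior setT A.
Proof.
apply/seteqP; split=> x.
  move=> /nbhs_ballP [e e0 eA]; split; first exact/eA/ballxx.
  by exists e; split => // y /eA.
by move=> [_ [e [e0 eA]]]; apply/nbhs_ballP; exists e => // y /eA; apply.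
Qed.

Section RelativeInterior.
Variables (S K : set E).
Hypotheses (sS : subspace S) (cK : convex_cone K).

Lemma rel_interiorZ (l : R) x :
  0 < l -> rel_interior S K x -> rel_interior S K (l *: x).
Proof.
move=> l0 [Kx [e [e0 eK]]]; split; first by apply: coneZ => //; exact: ltW.
exists (l * e); split=> [|y xy Sy]; first exact: mulr_gt0.
have l_neq0 : l != 0 by rewrite gt_eqF.
rewrite -[y](scalerKV l_neq0); apply: coneZ => //; first exact: ltW.
apply: eK; last exact: subspaceZ.
move: xy; rewrite -!ball_normE /= -[x in x - l^-1 *: y](scalerK l_neq0) -scalerBr.
rewrite normrZ gtr0_norm ?invr_gt0 // => xy.
by rewrite mulrC ltr_pdivrMr // mulrC.
Qed.

Lemma rel_interiorD x w :
  rel_interior S K x -> K w -> S w -> rel_interior S K (x + w).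
Proof.
move=> [Kx [e [e0 eK]]] Kw Sw; split; first exact: coneD.
exists e; split=> // y xy Sy; rewrite -(subrK w y); apply: coneD => //.
apply: eK; last by apply: subspaceD => //; exact: subspaceN.
by move: xy; rewrite -!ball_normE /= opprB addrA.
Qed.

End RelativeInterior.

Lemma rel_interior_shift {S K : set E} {x v} : subspace S ->
  rel_interior S K x -> S x -> S v ->
  exists2 d : R, 0 < d & forall e, `|e| <= d -> K (x + e *: v).
Proof.
move=> sS [Kx [r [r0 rK]]] Sx Sv.
have v1 : 0 < `|v| + 1 by rewrite ltr_pwDr.
exists (r / (`|v| + 1)); first by rewrite divr_gt0.
move=> e le; apply: rK; last by apply: subspaceD => //; exact: subspaceZ.
rewrite -ball_normE /= opprD addNKr normrN normrZ.
apply: (le_lt_trans (ler_wpM2r (normr_ge0 v) le)).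
by rewrite mulrAC ltr_pdivrMr // ltr_pM2l // ltrDl.
Qed.

Lemma rel_interiorN {S A : set E} {x} : subspace S ->
  rel_interior S [set y | A (- y)] x <-> rel_interior S A (- x).
Proof.
move=> sS; split=> [[Ax [e [e0 eA]]] | [Ax [e [e0 eA]]]]; split=> //.
  exists e; split=> // y xy Sy; rewrite -[y]opprK; apply: eA; last exact: subspaceN.
  by move: xy; rewrite -!ball_normE /= -opprD normrN opprK.
exists e; split=> // y xy Sy; apply: eA; last exact: subspaceN.
by move: xy; rewrite -!ball_normE /= -opprD normrN.
Qed.

Lemma interiorZ {C : set E} {l : R} {x} :
  convex_cone C -> 0 < l -> interior C x -> interior C (l *: x).
Proof. by rewrite !interior_rel_interior => cC; apply: rel_interiorZ. Qed.

Lemma interiorD {C : set E} {x w} :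
  convex_cone C -> interior C x -> C w -> interior C (x + w).
Proof. by rewrite !interior_rel_interior => cC Cx Cw; apply: rel_interiorD. Qed.

Lemma entry_le_norm (y : E) i j : `|y i j| <= `|y|.
Proof.
rewrite [leRHS]mx_normrE.
exact: (le_bigmax _ (fun ij : 'I_1 * 'I_n => `|y ij.1 ij.2|) (i, j)).
Qed.

Lemma generating_interior {C : set E} :
  convex_cone C -> generating C -> exists c, interior C c.
Proof.
move=> cC gC.
(* with e_i = y_i - z_i for y_i, z_i in C, every y at sup-norm distance < 1 from
   c := sum_i (y_i + z_i) is sum_i ((1 + u_i) y_i + (1 - u_i) z_i), |u_i| < 1 *)
have dec i : {yz : E * E | [/\ C yz.1, C yz.2 & 'e_i = yz.1 - yz.2]}.
  by apply: cid; have [y [z [Cy [Cz ->]]]] := gC 'e_i; exists (y, z).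
pose f i := sval (dec i).
exists (\sum_i ((f i).1 + (f i).2)); apply/nbhs_ballP; exists 1 => [|y]; first exact: ltr01.
rewrite -ball_normE /= => cy.
set c := \sum_i _ in cy; pose u := y - c.
have -> : y = \sum_i ((1 + u 0 i) *: (f i).1 + (1 - u 0 i) *: (f i).2).
  rewrite -[y in LHS](subrK c) -/u {1}(row_sum_delta u) /c -big_split /=.
  apply: eq_bigr => i _; have [_ _ ->] := svalP (dec i).
  by apply/rowP => k; rewrite !mxE; ring.
apply: (big_ind C) => [|a b|i _]; [exact: cone0 | exact: coneD |].
have : `|u 0 i| < 1 by apply: le_lt_trans (entry_le_norm u 0 i) _; rewrite /u distrC.
rewrite ltr_norml => /andP[u_gt u_lt]; have [C1 C2 _] := svalP (dec i).
by apply: (coneD cC); apply: (coneZ cC) => //; lra.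
Qed.

End Cones.
Arguments rel_interiorZ {R n S K}.
Arguments rel_interiorD {R n S K}.

Section InvariantCone.
Variables (R : realType) (n : nat) (h : 'M[R]_n) (C : set 'rV[R]_n).
Local Notation E := 'rV[R]_n.
Local Notation CE j := (C `&` Eig h j).
Hypotheses (diag_h : diag_spec101 h) (cC : convex_cone C) (closedC : closed C)
  (generatingC : generating C) (expthC : forall t x, C x -> C (expth h t x))
  (tauC : forall x, C x -> C (- tau h x)).

Lemma expth_eig t (xm xp : E) : Eig h (-1) xm -> Eig h 1 xp ->
  expth h t (xm + xp) = expR (- t) *: xm + expR t *: xp.
Proof.
move=> hm hp; have h00 : Eig h 0 (0 : E) by case: (Eig_subspace h 0).
by rewrite /expth -{1}(addr0 xm) expzh_eig //= cos0 !mulr1 addr0.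
Qed.

Lemma tau_eig (xm x0 xp : E) : Eig h (-1) xm -> Eig h 0 x0 -> Eig h 1 xp ->
  tau h (xm + x0 + xp) = - xm + x0 - xp.
Proof.
by move=> hm h0 hp; rewrite /tau expzh_eig //= oppr0 expR0 cospi mul1r !scaleN1r.
Qed.

Lemma cone_eig_rescale {xm xp : E} {s : R} : Eig h (-1) xm -> Eig h 1 xp ->
  C (xm + xp) -> 0 < s -> C (xm + s *: xp).
Proof.
move=> hm hp Cx s0; pose t := ln s / 2.
(* e^t e^{th} (xm + xp) = xm + e^{2t} xp *)
have ett : expR t * expR t = s by rewrite -expRD -splitr lnK ?posrE.
have etNt : expR t * expR (- t) = 1 by rewrite -expRD subrr expR0.
have := coneZ cC (ltW (expR_gt0 t)) (expthC t _ Cx).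
by rewrite expth_eig // scalerDr !scalerA etNt ett scale1r.
Qed.

Lemma cone_eig_split {xm xp : E} : Eig h (-1) xm -> Eig h 1 xp ->
  C (xm + xp) -> C xm /\ C xp.
Proof.
move=> hm hp Cx; rewrite (closure_id C).1 //; split.
  by apply: (closure_ray xp) => s s0; exact: cone_eig_rescale.
apply: (closure_ray xm) => s s0.
have s_neq0 : s != 0 by rewrite gt_eqF.
rewrite -[xp](scalerKV s_neq0) -scalerDr addrC.
by apply: coneZ cC (ltW s0) _; apply: cone_eig_rescale; rewrite ?invr_gt0.
Qed.

Lemma interior_eig_point : exists vm vp : E,
  [/\ Eig h (-1) vm, Eig h 1 vp & interior C (vm + vp)].
Proof.
have [c Cc] := generating_interior cC generatingC.
have [cm [c0 [cp [hm [h0 [hp dec_c]]]]]] := diag_h c.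
(* c + (-tau c) = 2 c_- + 2 c_+ *)
have := interiorD cC Cc (tauC _ (interior_subset Cc)).
rewrite dec_c tau_eig // => Cc2.
exists (cm + cm), (cp + cp); split; [exact: EigD | exact: EigD |].
rewrite (_ : _ + _ = cm + c0 + cp + - (- cm + c0 - cp)) //.
by apply/rowP => k; rewrite !mxE; ring.
Qed.

Lemma interior_eig_split {xp xm : E} : Eig h 1 xp -> Eig h (-1) xm ->
  interior C (xp + xm) ->
  rel_interior (Eig h 1) (CE 1) xp /\ rel_interior (Eig h (-1)) (CE (-1)) xm.
Proof.
move=> hp hm /nbhs_ballP [r r0 rC].
have Cxp : C (xp + xm) by apply: rC; exact: ballxx.
have [Cm Cp] : C xm /\ C xp by apply: cone_eig_split; rewrite // addrC.
split; split=> //; exists r; split=> // y xy hy; split=> //.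
  have [] // := cone_eig_split hm hy; rewrite addrC; apply: rC.
  by move: xy; rewrite -!ball_normE /= opprD addrACA subrr addr0.
have [] // := cone_eig_split hy hp; rewrite addrC; apply: rC.
by move: xy; rewrite -!ball_normE /= opprD addrACA subrr add0r.
Qed.

Lemma interior_eigD {xp xm : E} :
  rel_interior (Eig h 1) (CE 1) xp -> rel_interior (Eig h (-1)) (CE (-1)) xm ->
  interior C (xp + xm).
Proof.
move=> Ixp Ixm; have [vm [vp [hvm hvp Iv]]] := interior_eig_point.
have [dp dp0 Cp] := rel_interior_shift (Eig_subspace h 1) Ixp Ixp.1.2 hvp.
have [dm dm0 Cm] := rel_interior_shift (Eig_subspace h (-1)) Ixm Ixm.1.2 hvm.
pose e := Num.min dp dm.
have e0 : 0 < e by rewrite lt_min dp0 dm0.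
have [Ce1 _] := Cp (- e) ltac:(by rewrite normrN gtr0_norm // ge_min lexx).
have [Ce2 _] := Cm (- e) ltac:(by rewrite normrN gtr0_norm // ge_min lexx orbT).
have := interiorD cC (interiorZ cC e0 Iv) (coneD cC Ce1 Ce2).
by rewrite (_ : _ + _ = xp + xm) //; apply/rowP => k; rewrite !mxE; ring.
Qed.

Lemma Wset_eig {xm x0 xp : E} : Eig h (-1) xm -> Eig h 0 x0 -> Eig h 1 xp ->
  Wset h C (xm + x0 + xp) <->
  rel_interior (Eig h 1) (CE 1) xp /\ rel_interior (Eig h (-1)) (CE (-1)) (- xm).
Proof.
have CminusE : Cminus h C = [set y | CE (-1) (- y)].
  apply/seteqP; split=> y [Cy hy]; split=> //; first exact: EigN.
  by rewrite -[y]opprK; apply: EigN.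
move=> hm h0 hp; rewrite /Wset CminusE; split.
  move=> [yp [y0 [ym [Iyp [hy0 [Iym dec]]]]]].
  have hyp : Eig h 1 yp by case: Iyp => -[].
  have hym : Eig h (-1) ym by rewrite -[ym]opprK; apply: EigN; case: Iym => -[].
  have [-> _ ->] : [/\ xm = ym, x0 = y0 & xp = yp].
    by apply: (eig_decomp_inj (h := h)) => //; rewrite dec addrC (addrC yp) addrA.
  by split=> //; apply/(rel_interiorN (Eig_subspace h (-1))).
move=> [Ixp Ixm]; exists xp, x0, xm; split=> //; split=> //; split.
  exact/(rel_interiorN (Eig_subspace h (-1))).
by rewrite addrC (addrC xm) addrA.
Qed.

Lemma convex_cone_eig j : convex_cone (CE j).
Proof. exact: convex_coneI cC (Eig_subspace h j). Qed.

Lemma strip_pihalf : strip 0 (pi / 2 : R).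
Proof. by rewrite /strip divr_gt0 ?pi_gt0 //= ltr_pdivrMr // ltr_pMr ?pi_gt0 // ltr1n. Qed.

Lemma expzh_im_pihalf (xm x0 xp : E) : Eig h (-1) xm -> Eig h 0 x0 -> Eig h 1 xp ->
  (expzh h 0 (pi / 2) (xm + x0 + xp, 0)).2 = xp - xm.
Proof.
by move=> hm h0 hp; rewrite expzh_eig //= oppr0 expR0 sin_pihalf mulr1 !scale1r.
Qed.

Lemma Wset_interior :
  Wset h C = [set x | forall a b, strip a b -> interior C (expzh h a b (x, 0)).2].
Proof.
apply/seteqP; split=> x; have [xm [x0 [xp [hm [h0 [hp ->]]]]]] := diag_h x.
  move=> /(Wset_eig hm h0 hp) [Ixp Ixm] a b sab.
  have sb : 0 < sin b by exact: sin_gt0_pi.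
  rewrite expzh_eig //= -scalerN; apply: interior_eigD.
    apply: (rel_interiorZ (Eig_subspace h 1) (convex_cone_eig 1)) => //.
    by rewrite mulr_gt0 ?expR_gt0.
  apply: (rel_interiorZ (Eig_subspace h (-1)) (convex_cone_eig (-1))) => //.
  by rewrite mulr_gt0 ?expR_gt0.
move=> /(_ 0 (pi / 2) strip_pihalf); rewrite expzh_im_pihalf // => Ix.
by apply/(Wset_eig hm h0 hp); apply: interior_eig_split => //; exact: EigN.
Qed.

Lemma Wset_closure :
  closure (Wset h C) = [set x | forall a b, strip a b -> C (expzh h a b (x, 0)).2].
Proof.
apply/seteqP; split=> x.
  move=> Wx a b sab; have [M imE] := expzh_imE (h := h) a b; rewrite imE.
  have closedCM : closed ((fun y : E => y *m M) @^-1` C).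
    by move/continuous_closedP: (mulmxr_continuous M); apply.
  have WCM : Wset h C `<=` (fun y : E => y *m M) @^-1` C.
    by rewrite Wset_interior => y /(_ a b sab) /interior_subset; rewrite imE.
  by move: (closureS WCM Wx); rewrite -((closure_id _).1 closedCM).
have [xm [x0 [xp [hm [h0 [hp ->]]]]]] := diag_h x.
move=> /(_ 0 (pi / 2) strip_pihalf); rewrite expzh_im_pihalf // addrC => Cx.
have [CNxm Cxp] := cone_eig_split (EigN hm) hp Cx.
have [vm [vp [hvm hvp Iv]]] := interior_eig_point.
have [Ivp Ivm] := interior_eig_split hvp hvm ltac:(by rewrite addrC).
apply: (closure_ray (vp - vm)) => e e0.
rewrite (_ : _ + e *: _ = xm - e *: vm + x0 + (xp + e *: vp)); last first.
  by apply/rowP => k; rewrite !mxE; ring.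
apply/Wset_eig => //; first by apply: EigD => //; apply: EigN; apply: EigZ.
  by apply: EigD => //; apply: EigZ.
have cE1 := convex_cone_eig 1; have cEN1 := convex_cone_eig (-1).
split.
  rewrite addrC; apply: (rel_interiorD (Eig_subspace h 1) cE1) => //.
  exact: (rel_interiorZ (Eig_subspace h 1) cE1).
rewrite opprB; apply: (rel_interiorD (Eig_subspace h (-1)) cEN1); last exact: EigN.
  exact: (rel_interiorZ (Eig_subspace h (-1)) cEN1).
by split=> //; exact: EigN.
Qed.

End InvariantCone.

Theorem lemma3p3 (R : realType) (n : nat) (h : 'M[R]_n) (C : set 'rV[R]_n) :
  diag_spec101 h ->
  convex_cone C -> closed C -> pointed C -> generating C ->
  (forall t x, C x -> C (expth h t x)) ->
  (forall x, C x -> C (- tau h x)) ->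
  (Wset h C = [set x | forall a b, strip a b -> interior C (expzh h a b (x, 0)).2])
  /\
  (closure (Wset h C) = [set x | forall a b, strip a b -> C (expzh h a b (x, 0)).2]).
Proof.
move=> diag_h cC closedC _ generatingC expthC tauC.
by split; [exact: Wset_interior | exact: Wset_closure].
Qed.
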